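(* Let $N=n$ be prime, $f=x_1^N+\dots+x_N^N$, $S\subseteq S_N$, $G=S\ltimes\mathrm{SL}_f$. Let $u=\sigma g\in G$ ($\sigma\in S$, $g\in\mathrm{SL}_f$) where $\sigma=\prod_{a=1}^m\sigma_a$ is the decomposition into disjoint cycles (cycles of length 1 included) with $m\ge 2$, and let $i_a$ be the first index of the support of $\sigma_a$. Then there exist integers $d_1,\dots,d_m$ such that $u$ is conjugate in $G$ to $\prod_{a=1}^m\sigma_at_{i_a}^{d_a}$.
   Context: $\zeta=\exp(2\pi\sqrt{-1}/N)$; $t_k$ is the diagonal map multiplying $x_k$ by $\zeta$ and fixing the other coordinates; $G_f^d=\langle t_1,\dots,t_N\rangle$, $\mathrm{SL}_f=\{g\in G_f^d:\det g=1\}$; $S_N$ acts on $\mathbb C^N$ by permuting coordinates and $S\ltimes\mathrm{SL}_f\subseteq GL_N(\mathbb C)$ is the generated group. *)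

From HB Require Import structures.
From mathcomp Require Import all_boot all_order all_algebra all_fingroup all_field.
Set Implicit Arguments. Unset Strict Implicit. Unset Printing Implicit Defensive.
Import Order.TTheory GRing.Theory Num.Theory.
Local Open Scope ring_scope.

(* Dimension N = n.+1 (so that 'M_N has its canonical ring structure). *)

(* zeta : a primitive N-th root of unity in algC (stands for exp(2 pi i/N);
   the groups below do not depend on which primitive root is chosen). *)
Definition zeta (n : nat) : algC := sval (C_prim_root_exists (ltn0Sn n)).

Definition tgen (n : nat) (k : 'I_n.+1) : 'M[algC]_n.+1 :=
  diag_mx (\row_(j < n.+1) (if j == k then zeta n else 1)).

Inductive gen (n : nat) (P : 'M[algC]_n.+1 -> Prop) : 'M[algC]_n.+1 -> Prop :=
| gen_base M : P M -> gen P M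
| gen_one : gen P 1
| gen_mul M M' : gen P M -> gen P M' -> gen P (M * M')
| gen_inv M : gen P M -> gen P (M^-1).

Definition Gfd (n : nat) : 'M[algC]_n.+1 -> Prop :=
  gen (fun M => exists k : 'I_n.+1, M = tgen k).

Definition SLf (n : nat) (M : 'M[algC]_n.+1) : Prop := Gfd M /\ \det M = 1.

(* S |x SL_f : the subgroup of GL_N(C) generated by the permutation
   matrices of S and by SL_f. *)
Definition Ggrp (n : nat) (S : {set 'S_n.+1}) : 'M[algC]_n.+1 -> Prop :=
  gen (fun M => (exists2 s, s \in S & M = perm_mx s) \/ SLf M).

Definition conj_in (n : nat) (H : 'M[algC]_n.+1 -> Prop) (u v : 'M[algC]_n.+1) :=
  exists h, H h /\ v = h * u * h^-1.

Definition cycle_of (n : nat) (s : 'S_n.+1) (A : {set 'I_n.+1}) : 'S_n.+1 :=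
  restr_perm A s.

Definition first_idx (n : nat) (A : {set 'I_n.+1}) : 'I_n.+1 :=
  [arg min_(i < ord0 in A) (i : nat)].

From HB Require Import structures.
From mathcomp Require Import all_boot all_order all_algebra all_fingroup all_field.
Set Implicit Arguments.
Unset Strict Implicit.
Unset Printing Implicit Defensive.
Import Order.TTheory GRing.Theory Num.Theory.
Local Open Scope ring_scope.

(* Write g = diag(x): the entries x k are N-th roots of unity, and sigma g is the
   monomial matrix with weights x.  Conjugating it by a diagonal matrix diag(y) keeps
   sigma and replaces the weight at sigma k by y k * x (sigma k) / y (sigma k).
   Taking for y k the product of the weights met along the cycle of k, from its first
   index up to k, empties every position of a cycle except its first index, which
   receives the product of all the weights of the cycle: this is the normal form
   prod_a sigma_a t_(i_a)^(d_a).  Multiplying y by a root of unity lam on one cycle of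
   length L preserves this and multiplies det diag(y) by lam^L.  Since sigma has at
   least two cycles, 0 < L < N, so L is prime to N and lam can be chosen to put
   diag(y) in SL_f. *)

Lemma unity_root_prod (R : comPzSemiRingType) (m : nat) (I : Type) (r : seq I)
    (P : pred I) (F : I -> R) :
  (forall i, P i -> F i ^+ m = 1) -> (\prod_(i <- r | P i) F i) ^+ m = 1.
Proof. by move=> Fm; rewrite -prodrXl big1. Qed.

Lemma coprime_expr_unity_surj (R : pzSemiRingType) (m L : nat) (rho : R) :
  coprime L m -> rho ^+ m = 1 -> exists2 lam : R, lam ^+ m = 1 & lam ^+ L = rho.
Proof.
move=> + rho_m; have [->|L_gt0] := posnP L => coLm.
  move: coLm; rewrite /coprime gcd0n => /eqP m1.
  by exists 1; rewrite ?expr1n // -rho_m m1.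
have [km kn def_km _] := egcdnP m L_gt0; move/eqP: coLm def_km => -> def_km.
exists (rho ^+ km); first by rewrite -exprM mulnC exprM rho_m expr1n.
by rewrite -exprM def_km addn1 exprS mulnC exprM rho_m expr1n mulr1.
Qed.

Lemma card_porbit_lt (T : finType) (s : {perm T}) x :
  (1 < #|porbits s|)%N -> (#|porbit s x| < #|T|)%N.
Proof.
move=> two; rewrite ltnNge; apply: contraL two => full.
have orbit_full : porbit s x = setT by apply/eqP; rewrite eqEcard subsetT cardsT.
rewrite -leqNgt -(cards1 (porbit s x)) subset_leq_card //.
by apply/subsetP => _ /imsetP[y _ ->]; rewrite inE eq_porbit_mem orbit_full inE.
Qed.

Lemma porbit_fconnect (T : finType) (s : {perm T}) x y :
  y \in porbit s x -> fconnect s x y.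
Proof. by case/porbitP => j ->; rewrite permX fconnect_iter. Qed.

Lemma porbitS (T : finType) (s : {perm T}) x : porbit s (s x) = porbit s x.
Proof. by rewrite -[s x]/((s ^+ 1)%g x) porbit_perm. Qed.

(* The default [ord0] of the [arg min] defining [first_idx] need not lie in [A]. *)
Lemma mem_first_idx (n : nat) (A : {set 'I_n.+1}) x : x \in A -> first_idx A \in A.
Proof.
move=> xA; rewrite /first_idx /arg_min /extremum.
case: pickP => [i /andP[] // | no_min].
have [j Aj j_min] := arg_minnP (fun i : 'I_n.+1 => i : nat) xA.
suff : false by [].
by rewrite -(no_min j) /=; apply/andP; split; [exact: Aj | apply/forall_inP => k /j_min].
Qed.

Section DiagonalAndMonomial.
Variables (R : comUnitRingType) (n : nat).
Local Notation N := n.+1.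
Implicit Types (x y w : 'I_N -> R) (s t : 'S_N).

Definition diagf x : 'M[R]_N := diag_mx (\row_k x k).

Lemma eq_diagf x y : x =1 y -> diagf x = diagf y.
Proof. by move=> xy; congr diag_mx; apply/rowP => k; rewrite !mxE. Qed.

Lemma diagf1 : diagf (fun=> 1) = 1.
Proof. by apply/matrixP => i j; rewrite !mxE. Qed.

Lemma diagfM x y : diagf x * diagf y = diagf (fun k => x k * y k).
Proof. by rewrite -mulmxE mulmx_diag; congr diag_mx; apply/rowP => k; rewrite !mxE. Qed.

Lemma diagfX x m : diagf x ^+ m = diagf (fun k => x k ^+ m).
Proof.
elim: m => [|m IHm]; first by rewrite expr0 -diagf1.
by rewrite exprS IHm diagfM; apply: eq_diagf => k; rewrite exprS.
Qed.

Lemma diagf_prod (I : Type) (r : seq I) (F : I -> 'I_N -> R) :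
  \prod_(i <- r) diagf (F i) = diagf (fun k => \prod_(i <- r) F i k).
Proof.
elim: r => [|i r IHr].
  by rewrite big_nil -diagf1; apply: eq_diagf => k; rewrite big_nil.
by rewrite big_cons IHr diagfM; apply: eq_diagf => k; rewrite big_cons.
Qed.

Lemma det_diagf x : \det (diagf x) = \prod_k x k.
Proof. by rewrite det_diag; apply: eq_bigr => k _; rewrite mxE. Qed.

Lemma diagf_inv x y : (forall k, x k * y k = 1) -> (diagf x)^-1 = diagf y.
Proof.
move=> xy; have xy1 : diagf x * diagf y = 1 by rewrite diagfM -diagf1; apply: eq_diagf.
have [x_unit _] := mulmx1_unit xy1.
by rewrite -[RHS](mulKr x_unit) xy1 mulr1.
Qed.

Lemma diagf_perm_mx x t :
  diagf x * perm_mx t = perm_mx t * diagf (fun k => x ((t^-1)%g k)).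
Proof.
apply/matrixP => i j; rewrite -!mulmxE mul_diag_mx mul_mx_diag !mxE.
by case: eqP => [<-|_]; rewrite ?permK ?mulr1 ?mul1r ?mulr0 ?mul0r.
Qed.

Lemma monomialM s t x y :
  perm_mx s * diagf x * (perm_mx t * diagf y) =
  perm_mx (s * t)%g * diagf (fun k => x ((t^-1)%g k) * y k).
Proof.
rewrite mulrA -(mulrA _ (diagf x)) diagf_perm_mx mulrA perm_mxM mulmxE.
by rewrite -mulrA diagfM.
Qed.

Lemma diagf_conj_monomial s x y w :
  (forall k, y k * x (s k) = w (s k) * y (s k)) ->
  diagf y * (perm_mx s * diagf x) = perm_mx s * diagf w * diagf y.
Proof.
move=> cocycle; apply/matrixP => i j; rewrite -!mulmxE mul_diag_mx !mul_mx_diag !mxE.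
by case: eqP => [<-|_]; rewrite ?mul1r ?mul0r ?mulr0 ?cocycle.
Qed.

End DiagonalAndMonomial.

Section CycleDecomposition.
Variables (n : nat) (s : 'S_n.+1).
Local Notation N := n.+1.

Lemma mem_porbits_eq A i : A \in porbits s -> (i \in A) = (porbit s i == A).
Proof. by case/imsetP => x _ ->; rewrite eq_porbit_mem. Qed.

Lemma cycle_ofE A i : A \in porbits s -> cycle_of s A i = if i \in A then s i else i.
Proof.
move=> As; case: ifP => iA; last by rewrite (out_perm (restr_perm_on _ _)) ?iA.
rewrite /cycle_of restr_permE //; apply/astabsP => j.
by rewrite /= /aperm !mem_porbits_eq // porbitS.
Qed.

Lemma prod_cycle_of (r : seq {set 'I_N}) i :
  uniq r -> {subset r <= porbits s} ->
  (\prod_(A <- r) cycle_of s A)%g i = if porbit s i \in r then s i else i.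
Proof.
elim: r i => [|A r IHr] i /=; first by rewrite big_nil perm1.
case/andP => Ar ur Ar_porbits.
have As : A \in porbits s by apply: Ar_porbits; rewrite inE eqxx.
have r_porbits : {subset r <= porbits s}.
  by move=> B Br; apply: Ar_porbits; rewrite inE Br orbT.
rewrite big_cons permM cycle_ofE // inE mem_porbits_eq //.
have [iA|iA] := eqVneq (porbit s i) A; last by rewrite IHr.
by rewrite IHr // porbitS iA (negbTE Ar).
Qed.

Lemma prod_cycle_monomial (R : comUnitRingType) (r : seq {set 'I_N})
    (u : {set 'I_N} -> 'I_N -> R) :
  uniq r -> {subset r <= porbits s} ->
  (forall A k, A \in r -> k \notin A -> u A k = 1) ->
  \prod_(A <- r) (perm_mx (cycle_of s A) * diagf (u A)) =
  perm_mx (\prod_(A <- r) cycle_of s A)%g *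
    diagf (fun k => if porbit s k \in r then u (porbit s k) k else 1).
Proof.
elim: r => [|A r IHr] /=.
  by rewrite !big_nil perm_mx1 -mulmxE mul1mx -diagf1.
case/andP => Ar ur r_porbits u1.
have As : A \in porbits s by apply: r_porbits; rewrite inE eqxx.
have {}r_porbits : {subset r <= porbits s}.
  by move=> B Br; apply: r_porbits; rewrite inE Br orbT.
rewrite !big_cons IHr // => [|B k Br]; last by apply: u1; rewrite inE Br orbT.
rewrite monomialM; congr (_ * _); apply: eq_diagf => k.
set t := (\prod_(B <- r) cycle_of s B)%g.
have t_fix i : i \in A -> t i = i.
  move=> iA; rewrite prod_cycle_of // (eqP (_ : porbit s i == A)) -?mem_porbits_eq //.
  by rewrite (negbTE Ar).
rewrite inE -mem_porbits_eq //; have [kA|kA] /= := boolP (k \in A).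
  rewrite -{1}(t_fix k kA) permK (eqP (_ : porbit s k == A)) -?mem_porbits_eq //.
  by rewrite (negbTE Ar) mulr1.
rewrite u1 ?inE ?eqxx ?mul1r //; apply: contra kA => tkA.
by rewrite -(permKV t k) t_fix.
Qed.

Lemma prod_porbits_monomial (R : comUnitRingType) (u : {set 'I_N} -> 'I_N -> R) :
  (forall A k, A \in porbits s -> k \notin A -> u A k = 1) ->
  \prod_(A in porbits s) (perm_mx (cycle_of s A) * diagf (u A)) =
  perm_mx s * diagf (fun k => u (porbit s k) k).
Proof.
move=> u1; rewrite -big_filter; set r := filter _ _.
have r_porbits A : (A \in r) = (A \in porbits s).
  by rewrite mem_filter mem_index_enum andbT.
have ur : uniq r by rewrite filter_uniq ?index_enum_uniq.
rewrite prod_cycle_monomial // => [|A|A k]; rewrite ?r_porbits //; last exact: u1.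
congr (perm_mx _ * _); last by apply: eq_diagf => k; rewrite r_porbits imset_f.
by apply/permP => i; rewrite prod_cycle_of // => [|A]; rewrite r_porbits ?imset_f.
Qed.

End CycleDecomposition.

Section Potential.
Variables (R : comPzSemiRingType) (n : nat) (s : 'S_n.+1) (x : 'I_n.+1 -> R).
Local Notation base k := (first_idx (porbit s k)).

Definition orbit_twist k : R :=
  if k == base k then \prod_(l < fingraph.order s k) x (iter l s k) else 1.

Definition potential k : R :=
  \prod_(l < findex s (base k) k) x (iter l.+1 s (base k)).

Lemma potential_cocycle k :
  potential k * x (s k) = orbit_twist (s k) * potential (s k).
Proof.
have base_s : base (s k) = base k by rewrite porbitS.
have conn : fconnect s (base k) k.
  by apply: porbit_fconnect; rewrite porbit_sym (mem_first_idx (porbit_id s k)).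
rewrite /potential /orbit_twist base_s.
set i := base k; set j := findex s i k.
have iter_j : iter j s i = k := iter_findex conn.
have sk_iter : s k = iter j.+1 s i by rewrite iterS iter_j.
have := findex_max conn; rewrite -/j leq_eqVlt => /orP[/eqP j_last | j_lt].
  have sk_i : s k = i by rewrite sk_iter j_last (iter_order (@perm_inj _ s)).
  rewrite sk_i eqxx findex0 big_ord0 mulr1 -j_last big_ord_recl /= -sk_i mulrC.
  by congr (_ * _); apply: eq_bigr => l _; rewrite /bump /= add1n.
have j_next : findex s i (s k) = j.+1 by rewrite sk_iter findex_iter.
have sk_ni : s k != i by apply: contra_eqN j_next => /eqP ->; rewrite findex0.
by rewrite (negbTE sk_ni) mul1r j_next big_ord_recr /= sk_iter.
Qed.

Lemma orbit_twist_unity m k :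
  (forall k, x k ^+ m = 1) -> orbit_twist k ^+ m = 1.
Proof.
by move=> xm; rewrite /orbit_twist; case: ifP => _; rewrite ?expr1n ?unity_root_prod.
Qed.

Lemma potential_unity m k : (forall k, x k ^+ m = 1) -> potential k ^+ m = 1.
Proof. by move=> xm; rewrite unity_root_prod. Qed.

End Potential.

Lemma diag_conj_orbit_twist (R : comUnitRingType) (n m : nat) (s : 'S_n.+1)
    (x : 'I_n.+1 -> R) (i : 'I_n.+1) :
  coprime #|porbit s i| m.+1 -> (forall k, x k ^+ m.+1 = 1) ->
  exists2 y : 'I_n.+1 -> R, (forall k, y k ^+ m.+1 = 1) /\ \prod_k y k = 1 &
    diagf y * (perm_mx s * diagf x) = perm_mx s * diagf (orbit_twist s x) * diagf y.
Proof.
move=> O_coprime xm; set O := porbit s i.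
pose P := \prod_k potential s x k.
have Pm : P ^+ m.+1 = 1 by apply: unity_root_prod => k _; apply: potential_unity.
have [lam lam_m lamO] : exists2 lam : R, lam ^+ m.+1 = 1 & lam ^+ #|O| = P ^+ m.
  by apply: coprime_expr_unity_surj; rewrite // exprAC Pm expr1n.
pose y k := (if k \in O then lam else 1) * potential s x k.
exists y; first split.
- by move=> k; rewrite exprMn potential_unity // mulr1; case: ifP; rewrite ?expr1n.
- by rewrite big_split /= -big_mkcond prodr_const lamO -exprSr Pm.
apply: diagf_conj_monomial => k.
have O_s : (s k \in O) = (k \in O) by rewrite porbit_sym porbitS porbit_sym.
by rewrite /y -mulrA potential_cocycle O_s mulrCA.
Qed.

Section DiagonalGroup.
Variable n : nat.
Local Notation N := n.+1.
Local Notation z := (zeta n).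

Lemma zeta_prim : N.-primitive_root z.
Proof. by rewrite /zeta; case: C_prim_root_exists. Qed.

Lemma tgen_exprz (k : 'I_N) (m : nat) :
  tgen k ^ Posz m = diagf (fun j => if j == k then z ^+ m else 1).
Proof.
rewrite /exprz (_ : tgen k = diagf (fun j => if j == k then z else 1)) // diagfX.
by apply: eq_diagf => j; case: ifP; rewrite ?expr1n.
Qed.

Lemma prod_cycle_tgen (s : 'S_N) (d : {set 'I_N} -> nat) :
  \prod_(A in porbits s) (perm_mx (cycle_of s A) * tgen (first_idx A) ^ Posz (d A)) =
  perm_mx s *
    diagf (fun k => if k == first_idx (porbit s k) then z ^+ d (porbit s k) else 1).
Proof.
under eq_bigr => A _ do rewrite tgen_exprz.
rewrite prod_porbits_monomial // => _ k /imsetP[i _ ->] ki.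
by rewrite ifN //; apply: contraNneq ki => ->; apply: mem_first_idx (porbit_id s i).
Qed.

Lemma gen_expr (P : 'M[algC]_N -> Prop) M m : gen P M -> gen P (M ^+ m).
Proof.
move=> PM; elim: m => [|m IHm]; first exact: gen_one.
by rewrite exprS; apply: gen_mul.
Qed.

Lemma Gfd_diagf (M : 'M[algC]_N) :
  Gfd M -> exists2 x, (forall k, x k ^+ N = 1) & M = diagf x.
Proof.
elim=> {M} [_ [k ->] | | _ _ _ [x xN ->] _ [y yN ->] | _ _ [x xN ->]].
- exists (fun j => if j == k then z else 1) => [j|//].
  by case: ifP; rewrite ?expr1n ?(prim_expr_order zeta_prim).
- by exists (fun=> 1); rewrite ?diagf1 // => _; rewrite expr1n.
- by exists (fun k => x k * y k); rewrite ?diagfM // => k; rewrite exprMn xN yN mulr1.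
- exists (fun k => x k ^+ n) => [k|]; first by rewrite -exprM mulnC exprM xN expr1n.
  by rewrite (diagf_inv (y := fun k => x k ^+ n)) // => k; rewrite -exprS xN.
Qed.

Lemma diagf_Gfd (x : 'I_N -> algC) : (forall k, x k ^+ N = 1) -> Gfd (diagf x).
Proof.
move=> xN; pose e k := val (sval (prim_rootP zeta_prim (xN k))).
have -> : diagf x = \prod_k tgen k ^ Posz (e k).
  rewrite (eq_bigr _ (fun k _ => tgen_exprz k (e k))) diagf_prod.
  apply: eq_diagf => j; rewrite (bigD1 j) //= eqxx big1 ?mulr1.
    by rewrite /e; case: prim_rootP.
  by move=> k; rewrite eq_sym => /negbTE ->.
apply: big_ind => [|M M'|k _]; [exact: gen_one | exact: gen_mul |].
by apply/gen_expr/gen_base; exists k.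
Qed.

End DiagonalGroup.

Theorem proposition5 (n : nat) (Hprime : prime n.+1) (S : {group 'S_n.+1})
    (sigma : 'S_n.+1) (g : 'M[algC]_n.+1) :
  sigma \in S -> SLf g -> (2 <= #|porbits sigma|)%N ->
  exists d : {set 'I_n.+1} -> int,
    conj_in (Ggrp S) (perm_mx sigma * g)
      (\prod_(A in porbits sigma)
          (perm_mx (cycle_of sigma A) * tgen (first_idx A) ^ (d A))).
Proof.
move=> _ [/Gfd_diagf[x xN ->] _] two_orbits.
have O_coprime : coprime #|porbit sigma ord0| n.+1.
  rewrite coprime_sym prime_coprime // gtnNdvd ?lt0n ?card_porbit_neq0 //.
  by have := card_porbit_lt ord0 two_orbits; rewrite card_ord.
have [y [yN y_det] y_conj] := diag_conj_orbit_twist O_coprime xN.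
have dP A : {m : 'I_n.+1 | orbit_twist sigma x (first_idx A) = zeta n ^+ m}.
  by have := orbit_twist_unity sigma (first_idx A) xN => /(prim_rootP (zeta_prim n)).
exists (fun A => Posz (sval (dP A))), (diagf y); split.
  by apply: gen_base; right; split; [exact: diagf_Gfd | rewrite det_diagf].
rewrite prod_cycle_tgen y_conj mulrK; last by rewrite unitmxE det_diagf y_det unitr1.
congr (_ * _); apply: eq_diagf => k; case: ifP => [/eqP k_first | k_nfirst].
  by case: (dP _) => m /= <-; rewrite -k_first.
by rewrite /orbit_twist k_nfirst.
Qed.
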